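(* Let $\rho>0$, $T>0$, $\theta=1/4$, $x,y\in\mathbb{R}$, and let $X^*_t=\frac12(x+y)V_t+\frac12(x-y)W_t$, $Y^*_t=\frac12(x+y)V_t-\frac12(x-y)W_t$ with $V,W$ as in the context. Then $$\mathscr C(X^*|Y^* )=\frac{(x+y)^2\big(36e^{6\rho T}(8\rho T+13)-60e^{3\rho T}-3\big)}{16\big(2e^{3\rho T}(3\rho T+5)-1\big)^2}+\frac{x^2-y^2}{2(\rho T+1)}+\frac{(x-y)^2}{16(\rho T+1)^2}.$$
   Context: $V_{0-}=1$, $V_t=\frac{e^{3\rho T}(6\rho(T-t)+4)-4e^{3\rho t}}{2e^{3\rho T}(3\rho T+5)-1}$ for $t\in[0,T]$; $W_{0-}=1$, $W_t=\frac{\rho(T-t)+1}{\rho T+1}$ for $t\in[0,T)$, $W_T=0$; both vanish for $t>T$. For deterministic right-continuous strategies $X,Y$ of bounded variation on $[0,T]$ with given values at $0-$ (so that $dX$ charges the jump $\Delta X_0=X_0-X_{0-}$), the liquidation costs are $$\mathscr C(X|Y)=\frac12\int_{[0,T]}\int_{[0,T]}e^{-\rho|t-s|}\,dX_s\,dX_t+\int_{[0,T]}\int_{[0,t)}e^{-\rho(t-s)}\,dY_s\,dX_t+\frac12\sum_{t\in[0,T]}\Delta X_t\Delta Y_t+\theta\sum_{t\in[0,T]}(\Delta X_t)^2.$$ *)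

From Stdlib Require Import Reals Lra List.
From Coquelicot Require Import Coquelicot.
Open Scope R_scope.

(* The strategies V and W of the context, on t >= 0 (they vanish for t > T);
   their values at 0- are V0m = W0m = 1. *)
Definition V0m : R := 1.
Definition W0m : R := 1.
Definition Vf (rho T t : R) : R :=
  if Rle_dec t T then
    (exp (3*rho*T) * (6*rho*(T - t) + 4) - 4 * exp (3*rho*t))
      / (2 * exp (3*rho*T) * (3*rho*T + 5) - 1)
  else 0.
Definition Wf (rho T t : R) : R :=
  if Rlt_dec t T then (rho*(T - t) + 1) / (rho*T + 1) else 0.

(* A description of the signed measure dX on [0,T] of a strategy of the form
   "finitely many jumps + absolutely continuous part with continuous density":
   dX = sum_i a_i delta_{t_i} + dens(s) ds. *)
Record rep := { jumps : list (R * R) ; dens : R -> R }.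

Definition lsum (l : list R) : R := fold_right Rplus 0 l.

Definition mu_int (T : R) (r : rep) (h : R -> R) : R :=
  lsum (map (fun p => snd p * h (fst p)) (jumps r))
  + RInt (fun s => dens r s * h s) 0 T.

Definition mu_int_lt (r : rep) (t : R) (h : R -> R) : R :=
  lsum (map (fun p => if Rlt_dec (fst p) t then snd p * h (fst p) else 0) (jumps r))
  + RInt (fun s => dens r s * h s) 0 t.

Definition jump_at (r : rep) (t : R) : R :=
  lsum (map (fun p => if Req_EM_T (fst p) t then snd p else 0) (jumps r)).

Definition is_rep (T X0m : R) (X : R -> R) (r : rep) : Prop :=
  NoDup (map fst (jumps r)) /\
  (forall p, In p (jumps r) -> 0 <= fst p <= T) /\
  (forall t, 0 <= t <= T -> continuous (dens r) t) /\
  (forall t, 0 <= t <= T ->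
     X t = X0m
           + lsum (map (fun p => if Rle_dec (fst p) t then snd p else 0) (jumps r))
           + RInt (dens r) 0 t).

Definition cost (rho theta T : R) (rX rY : rep) : R :=
  1/2 * mu_int T rX (fun t => mu_int T rX (fun s => exp (- rho * Rabs (t - s))))
  + mu_int T rX (fun t => mu_int_lt rY t (fun s => exp (- rho * (t - s))))
  + 1/2 * lsum (map (fun p => snd p * jump_at rY (fst p)) (jumps rX))
  + theta * lsum (map (fun p => (snd p)^2) (jumps rX)).

(* The cost depends only on the strategies X, Y and not on the
   chosen descriptions of dX, dY: two descriptions of the same strategy have
   densities that agree off the finitely many jump times (differentiate
   X = X_{0-} + jumps + int dens there) and hence everywhere by continuity, and
   then their cumulative jumps, hence their jumps, agree as well.  So the cost can
   be computed on a canonical description: V and W jump only at 0 and T and have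
   densities P + Q e^{3 rho t}.  For such measures the inner integrals
   int e^{-rho|t-s|} dX_s and int_[0,t) e^{-rho(t-s)} dY_s are Laurent polynomials
   in e^{rho t}, so every term of the cost integrates in closed form, and the
   theorem becomes a rational identity in e^{rho T} and rho T. *)

From Stdlib Require Import Reals Lra List.
From Coquelicot Require Import Coquelicot.
Open Scope R_scope.

Lemma lsum_map_ext_in {A} (L : list A) (f g : A -> R) :
  (forall p, In p L -> f p = g p) -> lsum (map f L) = lsum (map g L).
Proof. intro H. f_equal. apply map_ext_in. exact H. Qed.

Lemma lsum_map_add {A} (L : list A) (f g : A -> R) :
  lsum (map (fun p => f p + g p) L) = lsum (map f L) + lsum (map g L).
Proof. induction L; simpl; lra. Qed.

Lemma lsum_map_sub {A} (L : list A) (f g : A -> R) :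
  lsum (map (fun p => f p - g p) L) = lsum (map f L) - lsum (map g L).
Proof. induction L; simpl; lra. Qed.

Lemma lsum_map_eq0 {A} (L : list A) (f : A -> R) :
  (forall p, In p L -> f p = 0) -> lsum (map f L) = 0.
Proof. induction L as [|a L IH]; intro H; simpl; [|rewrite H, IH]; auto with datatypes; ring. Qed.

Lemma lsum_map_indicator (S : list R) t c (g : R -> R) :
  NoDup S -> In t S ->
  lsum (map (fun s => (if Req_EM_T t s then c else 0) * g s) S) = c * g t.
Proof.
  induction S as [|s S IH]; intros ND Hin; [destruct Hin|].
  inversion ND as [|? ? Hs ND']; subst; simpl.
  destruct Hin as [->|Hin].
  - destruct (Req_EM_T t t) as [_|]; [|congruence].
    rewrite lsum_map_eq0; [ring|].
    intros p Hp; destruct (Req_EM_T t p); [subst; contradiction|ring].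
  - destruct (Req_EM_T t s) as [->|_]; [contradiction|].
    rewrite IH by assumption; ring.
Qed.

Lemma finite_isolated (E : list R) m :
  exists d, 0 < d /\ forall z, In z E -> z <> m -> d <= Rabs (z - m).
Proof.
  induction E as [|z0 E [d [Hd HE]]].
  - exists 1; split; [lra|]; intros z [].
  - destruct (Req_dec z0 m) as [<-|Hz0].
    + exists d; split; [lra|]; intros z [<-|Hz]; [tauto|auto].
    + assert (0 < Rabs (z0 - m)) by (apply Rabs_pos_lt; lra).
      exists (Rmin d (Rabs (z0 - m))); split; [now apply Rmin_glb_lt|].
      intros z [<-|Hz] Hzm; [apply Rmin_r|].
      eapply Rle_trans; [apply Rmin_l|auto].
Qed.

Lemma continuous_eq0_off_finite (f : R -> R) (E : list R) a b t :
  a < b -> a <= t <= b -> continuous f t ->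
  (forall s, a < s < b -> ~ In s E -> f s = 0) -> f t = 0.
Proof.
  intros Hab Ht Hf H0.
  destruct (Req_dec (f t) 0) as [|Hne]; [assumption|exfalso].
  assert (Hpos : 0 < Rabs (f t)) by now apply Rabs_pos_lt.
  destruct (proj1 (filterlim_locally f (f t)) Hf (mkposreal _ Hpos)) as [delta Hdelta].
  destruct (finite_isolated E t) as [d [Hd HE]].
  set (e := Rmin (Rmin d delta) (b - a) / 3).
  assert (He : 0 < e /\ e < d /\ e < delta /\ 3 * e <= b - a).
  { pose proof (cond_pos delta).
    pose proof (Rmin_l (Rmin d delta) (b - a)); pose proof (Rmin_r (Rmin d delta) (b - a)).
    pose proof (Rmin_l d delta); pose proof (Rmin_r d delta).
    assert (0 < Rmin (Rmin d delta) (b - a)) by (repeat apply Rmin_glb_lt; lra).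
    unfold e; lra. }
  assert (Hm : exists m, a < m < b /\ Rabs (m - t) = e).
  { destruct (Rlt_dec (t + e) b).
    - exists (t + e); split; [lra|]. rewrite Rabs_right; lra.
    - exists (t - e); split; [lra|]. rewrite Rabs_left; lra. }
  destruct Hm as [m [Hmab Hmt]].
  assert (Hfm : f m = 0).
  { apply H0; [assumption|]. intro Hin.
    assert (Hmt_ne : m <> t) by (intros ->; rewrite Rminus_diag, Rabs_R0 in Hmt; lra).
    specialize (HE m Hin Hmt_ne); lra. }
  specialize (Hdelta m ltac:(change (Rabs (m - t) < delta); lra)).
  change (Rabs (f m - f t) < Rabs (f t)) in Hdelta.
  rewrite Hfm, Rminus_0_l, Rabs_Ropp in Hdelta; lra.
Qed.

Lemma is_derive_RInt_interior (f : R -> R) a b m :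
  (forall t, a <= t <= b -> continuous f t) -> a < m < b ->
  is_derive (RInt f a) m (f m).
Proof.
  intros Hf Hm. apply (is_derive_RInt f (RInt f a) a m); [|apply Hf; lra].
  apply (locally_interval _ m a b); simpl; try lra.
  intros u Hu1 Hu2. apply (RInt_correct f a u), ex_RInt_continuous.
  intros z Hz. rewrite Rmin_left in Hz by lra. rewrite Rmax_right in Hz by lra.
  apply Hf; lra.
Qed.

Definition jump_times (r : rep) : list R := map fst (jumps r).

Definition cum_jump (r : rep) (t : R) : R :=
  lsum (map (fun p => if Rle_dec (fst p) t then snd p else 0) (jumps r)).

Lemma is_rep_value T X0m X r t : is_rep T X0m X r -> 0 <= t <= T ->
  X t = X0m + cum_jump r t + RInt (dens r) 0 t.
Proof. intros (_ & _ & _ & H) Ht. exact (H t Ht). Qed.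

Lemma cum_jump_neg r t : (forall p, In p (jumps r) -> 0 <= fst p) -> t < 0 ->
  cum_jump r t = 0.
Proof.
  intros H Ht. apply lsum_map_eq0. intros p Hp. specialize (H p Hp).
  destruct (Rle_dec (fst p) t); [lra|reflexivity].
Qed.

Lemma cum_jump_step r s t : s < t -> (forall z, In z (jump_times r) -> ~ s < z < t) ->
  cum_jump r t - cum_jump r s = jump_at r t.
Proof.
  intros Hst H. unfold cum_jump, jump_at. rewrite <- lsum_map_sub.
  apply lsum_map_ext_in. intros p Hp. specialize (H (fst p) (in_map _ _ _ Hp)).
  destruct (Req_EM_T (fst p) t), (Rle_dec (fst p) t), (Rle_dec (fst p) s); lra.
Qed.

Lemma jump_at_notin r t : ~ In t (jump_times r) -> jump_at r t = 0.
Proof.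
  intro Ht. apply lsum_map_eq0. intros p Hp.
  destruct (Req_EM_T (fst p) t) as [<-|]; [|reflexivity].
  exfalso. exact (Ht (in_map _ _ _ Hp)).
Qed.

Lemma cum_jump_locally_const r m : ~ In m (jump_times r) ->
  locally m (fun u => cum_jump r u = cum_jump r m).
Proof.
  intro Hm. destruct (finite_isolated (jump_times r) m) as [d [Hd Hiso]].
  exists (mkposreal d Hd). intros u Hu. change (Rabs (u - m) < d) in Hu.
  assert (Hfree : forall a b, Rabs (a - m) < d -> Rabs (b - m) < d ->
            forall z, In z (jump_times r) -> ~ a < z < b).
  { intros a b Ha Hb z Hz Hab. destruct (Req_dec z m) as [->|Hzm]; [contradiction|].
    specialize (Hiso z Hz Hzm). unfold Rabs in *.
    repeat destruct Rcase_abs; lra. }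
  assert (Hu_notin : ~ In u (jump_times r)).
  { intro Hin. destruct (Req_dec u m) as [->|Hum]; [contradiction|].
    specialize (Hiso u Hin Hum); lra. }
  destruct (Rtotal_order u m) as [Hlt|[->|Hgt]]; [|reflexivity|].
  - assert (Hstep : cum_jump r m - cum_jump r u = jump_at r m).
    { apply cum_jump_step; [assumption|]. apply Hfree; [assumption|].
      rewrite Rminus_diag, Rabs_R0; lra. }
    rewrite jump_at_notin in Hstep by assumption; lra.
  - assert (Hstep : cum_jump r u - cum_jump r m = jump_at r u).
    { apply cum_jump_step; [assumption|]. apply Hfree; [|assumption].
      rewrite Rminus_diag, Rabs_R0; lra. }
    rewrite jump_at_notin in Hstep by assumption; lra.
Qed.

Lemma jump_sum_by_times r (S : list R) (g : R -> R) :
  NoDup S -> incl (jump_times r) S ->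
  lsum (map (fun p => snd p * g (fst p)) (jumps r)) =
  lsum (map (fun s => jump_at r s * g s) S).
Proof.
  intro HS. destruct r as [L d]. unfold jump_times, jump_at; simpl.
  induction L as [|p L IH]; intro Hincl; simpl.
  - symmetry. apply lsum_map_eq0. intros; simpl; ring.
  - rewrite (lsum_map_ext_in S _ (fun s => (if Req_EM_T (fst p) s then snd p else 0) * g s
        + lsum (map (fun q => if Req_EM_T (fst q) s then snd q else 0) L) * g s))
      by (intros; simpl; ring).
    rewrite lsum_map_add, lsum_map_indicator, IH; [reflexivity| |assumption|].
    + intros z Hz. apply Hincl. now right.
    + apply Hincl. now left.
Qed.

Lemma jump_at_self r p : NoDup (jump_times r) -> In p (jumps r) ->
  jump_at r (fst p) = snd p.
Proof.
  destruct r as [L d]. unfold jump_times, jump_at; simpl.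
  induction L as [|q L IH]; intros ND Hin; [destruct Hin|].
  inversion ND as [|? ? Hq ND']; subst. simpl.
  destruct Hin as [->|Hin].
  - destruct (Req_EM_T (fst p) (fst p)) as [_|]; [|congruence].
    rewrite lsum_map_eq0; [ring|].
    intros q Hq'. destruct (Req_EM_T (fst q) (fst p)) as [E|]; [|reflexivity].
    exfalso. apply Hq. rewrite <- E. now apply in_map.
  - rewrite IH by assumption. destruct (Req_EM_T (fst q) (fst p)) as [E|]; [|ring].
    exfalso. apply Hq. rewrite E. now apply in_map.
Qed.

Lemma jump_sq_sum_self r : NoDup (jump_times r) ->
  lsum (map (fun p => snd p ^ 2) (jumps r)) =
  lsum (map (fun p => snd p * jump_at r (fst p)) (jumps r)).
Proof.
  intro ND. apply lsum_map_ext_in. intros p Hp. rewrite jump_at_self by assumption. ring.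
Qed.

Section RepresentationUniqueness.

Variables (T X0m : R) (X : R -> R) (r r0 : rep).
Hypotheses (HT : 0 < T) (Hr : is_rep T X0m X r) (Hr0 : is_rep T X0m X r0).

Let times_in r' : is_rep T X0m X r' -> forall p, In p (jumps r') -> 0 <= fst p <= T.
Proof. now intros (_ & H & _). Qed.

Let dens_cont r' : is_rep T X0m X r' -> forall t, 0 <= t <= T -> continuous (dens r') t.
Proof. now intros (_ & _ & H & _). Qed.

Lemma dens_eq_off_jumps m : 0 < m < T ->
  ~ In m (jump_times r) -> ~ In m (jump_times r0) -> dens r m = dens r0 m.
Proof.
  intros Hm Hmr Hmr0.
  assert (Hder := fun r' (H : is_rep T X0m X r') =>
    is_derive_RInt_interior (dens r') 0 T m (dens_cont r' H) Hm).
  assert (Hconst : locally m (fun u =>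
            cum_jump r0 m - cum_jump r m = minus (RInt (dens r) 0 u) (RInt (dens r0) 0 u))).
  { apply (filter_imp (fun u => (cum_jump r u = cum_jump r m /\ cum_jump r0 u = cum_jump r0 m)
                                 /\ 0 < u < T)).
    - intros u [[E E0] Hu].
      pose proof (is_rep_value T X0m X r u Hr ltac:(lra)) as EX; rewrite E in EX.
      pose proof (is_rep_value T X0m X r0 u Hr0 ltac:(lra)) as EX0; rewrite E0 in EX0.
      unfold minus, plus, opp; simpl. lra.
    - apply filter_and; [apply filter_and; now apply cum_jump_locally_const|].
      apply (locally_interval _ m 0 T); simpl; intros; lra. }
  pose proof (is_derive_unique _ _ _ (is_derive_ext_loc _ _ _ _ Hconst (is_derive_const _ m))).
  pose proof (is_derive_unique _ _ _ (is_derive_minus _ _ _ _ _ (Hder r Hr) (Hder r0 Hr0))).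
  unfold minus, plus, opp, zero in *; simpl in *. lra.
Qed.

Lemma dens_eq t : 0 <= t <= T -> dens r t = dens r0 t.
Proof.
  intro Ht.
  enough (H : dens r t - dens r0 t = 0) by lra.
  apply (continuous_eq0_off_finite (fun s => dens r s - dens r0 s)
           (jump_times r ++ jump_times r0) 0 T t HT Ht).
  - apply (continuous_minus (dens r) (dens r0)); now apply dens_cont.
  - intros s Hs Hnot. rewrite dens_eq_off_jumps; [ring|assumption| |];
      intro Hin; apply Hnot, in_or_app; tauto.
Qed.

Lemma cum_jump_eq t : t <= T -> cum_jump r t = cum_jump r0 t.
Proof.
  intro Ht. destruct (Rlt_dec t 0) as [Hneg|Hnneg].
  - rewrite (cum_jump_neg r), (cum_jump_neg r0); try reflexivity; try assumption;
      intros p Hp; [pose proof (times_in r0 Hr0 p Hp)|pose proof (times_in r Hr p Hp)]; lra.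
  - assert (Ht' : 0 <= t <= T) by lra.
    assert (RInt (dens r) 0 t = RInt (dens r0) 0 t).
    { apply RInt_ext. intros z Hz.
      rewrite Rmin_left in Hz by lra. rewrite Rmax_right in Hz by lra.
      apply dens_eq; lra. }
    pose proof (is_rep_value T X0m X r t Hr Ht').
    pose proof (is_rep_value T X0m X r0 t Hr0 Ht').
    lra.
Qed.

Lemma jump_at_eq t : t <= T -> jump_at r t = jump_at r0 t.
Proof.
  intro Ht. destruct (finite_isolated (jump_times r ++ jump_times r0) t) as [d [Hd Hiso]].
  assert (Hfree : forall z, In z (jump_times r ++ jump_times r0) -> ~ t - d/2 < z < t).
  { intros z Hz Hzt. assert (Hne : z <> t) by lra. specialize (Hiso z Hz Hne).
    rewrite Rabs_left in Hiso; lra. }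
  rewrite <- (cum_jump_step r (t - d/2) t), <- (cum_jump_step r0 (t - d/2) t);
    try lra; try (intros z Hz; apply Hfree, in_or_app; tauto).
  rewrite !cum_jump_eq by lra. reflexivity.
Qed.

Lemma jump_sum_eq (g : R -> R) :
  lsum (map (fun p => snd p * g (fst p)) (jumps r)) =
  lsum (map (fun p => snd p * g (fst p)) (jumps r0)).
Proof.
  set (S := nodup Req_EM_T (jump_times r ++ jump_times r0)).
  assert (HS : forall z, In z S <-> In z (jump_times r) \/ In z (jump_times r0))
    by (intro z; unfold S; now rewrite nodup_In, in_app_iff).
  rewrite (jump_sum_by_times r S), (jump_sum_by_times r0 S);
    try apply NoDup_nodup; try (intros z Hz; apply HS; tauto).
  apply lsum_map_ext_in. intros z Hz. rewrite jump_at_eq; [reflexivity|].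
  apply HS in Hz as [Hz|Hz]; apply in_map_iff in Hz as [p [<- Hp]];
    [apply (times_in r Hr)|apply (times_in r0 Hr0)]; assumption.
Qed.

Lemma jump_sq_sum_eq :
  lsum (map (fun p => snd p ^ 2) (jumps r)) = lsum (map (fun p => snd p ^ 2) (jumps r0)).
Proof.
  rewrite (jump_sq_sum_self r), (jump_sq_sum_self r0) by (apply Hr || apply Hr0).
  rewrite <- (jump_sum_eq (jump_at r0)). apply lsum_map_ext_in. intros p Hp.
  rewrite jump_at_eq; [reflexivity|]. apply (times_in r Hr p Hp).
Qed.

Lemma mu_int_eq (h h' : R -> R) : (forall t, 0 <= t <= T -> h t = h' t) ->
  mu_int T r h = mu_int T r0 h'.
Proof.
  intro Hh. unfold mu_int. f_equal.
  - rewrite <- (jump_sum_eq h'). apply lsum_map_ext_in. intros p Hp.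
    rewrite Hh; [reflexivity|]. apply (times_in r Hr p Hp).
  - apply RInt_ext. intros z Hz.
    rewrite Rmin_left in Hz by lra. rewrite Rmax_right in Hz by lra.
    rewrite dens_eq, Hh; [reflexivity|lra|lra].
Qed.

Lemma mu_int_lt_eq t (h : R -> R) : 0 <= t <= T -> mu_int_lt r t h = mu_int_lt r0 t h.
Proof.
  intro Ht. unfold mu_int_lt. f_equal.
  - set (g := fun s => if Rlt_dec s t then h s else 0).
    assert (Hg : forall r',
      lsum (map (fun p => if Rlt_dec (fst p) t then snd p * h (fst p) else 0) (jumps r')) =
      lsum (map (fun p => snd p * g (fst p)) (jumps r'))).
    { intro r'. apply lsum_map_ext_in. intros p _. unfold g. destruct Rlt_dec; ring. }
    rewrite !Hg. apply jump_sum_eq.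
  - apply RInt_ext. intros z Hz.
    rewrite Rmin_left in Hz by lra. rewrite Rmax_right in Hz by lra.
    rewrite dens_eq by lra. reflexivity.
Qed.

End RepresentationUniqueness.

Lemma cost_rep_indep rho theta T X0m X Y0m Y rX rX' rY rY' : 0 < T ->
  is_rep T X0m X rX -> is_rep T X0m X rX' -> is_rep T Y0m Y rY -> is_rep T Y0m Y rY' ->
  cost rho theta T rX rY = cost rho theta T rX' rY'.
Proof.
  intros HT HX HX' HY HY'. unfold cost.
  rewrite (mu_int_eq T X0m X rX rX' HT HX HX' _
             (fun t => mu_int T rX' (fun s => exp (- rho * Rabs (t - s)))))
    by (intros; now apply (mu_int_eq T X0m X)).
  rewrite (mu_int_eq T X0m X rX rX' HT HX HX' _
             (fun t => mu_int_lt rY' t (fun s => exp (- rho * (t - s)))))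
    by (intros; now apply (mu_int_lt_eq T Y0m Y)).
  rewrite (jump_sq_sum_eq T X0m X rX rX' HT HX HX').
  rewrite (lsum_map_ext_in _ _ (fun p => snd p * jump_at rY' (fst p)))
    by (intros p Hp; rewrite (jump_at_eq T Y0m Y rY rY' HT HY HY'); [reflexivity|];
        destruct HX as (_ & Hin & _); apply (Hin p Hp)).
  rewrite (jump_sum_eq T X0m X rX rX' HT HX HX'). reflexivity.
Qed.

Lemma exp_Rminus a b : exp (a - b) = exp a / exp b.
Proof. unfold Rminus, Rdiv. now rewrite exp_plus, exp_Ropp. Qed.

Lemma exp_3mul r t : exp (3*r*t) = exp (r*t) ^ 3.
Proof. replace (3*r*t) with (r*t + (r*t + r*t)) by ring. rewrite !exp_plus. ring. Qed.

Lemma exp_6mul r t : exp (6*r*t) = exp (r*t) ^ 6.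
Proof. replace (6*r*t) with (3*r*t + 3*r*t) by ring. rewrite exp_plus, exp_3mul. ring. Qed.

Lemma is_RInt_antiderivative (F f g : R -> R) a b : a <= b ->
  (forall x, a <= x <= b -> is_derive F x (f x)) ->
  (forall x, a <= x <= b -> continuous f x) ->
  (forall x, a < x < b -> f x = g x) -> is_RInt g a b (F b - F a).
Proof.
  intros Hab Hd Hc He. apply (is_RInt_ext f).
  - intros x Hx. rewrite Rmin_left in Hx by lra. rewrite Rmax_right in Hx by lra. auto.
  - assert (H := is_RInt_derive F f a b).
    rewrite Rmin_left in H by lra. rewrite Rmax_right in H by lra. apply H; auto.
Qed.

Lemma ex_derive_continuous_R (f : R -> R) x : ex_derive f x -> continuous f x.
Proof. exact (ex_derive_continuous f x). Qed.

Ltac nonzero := repeat match goal with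
  | |- _ /\ _ => split | |- True => exact I
  | |- _ * _ <> 0 => apply Rmult_integral_contrapositive_currified
  | |- exp _ <> 0 => apply Rgt_not_eq, exp_pos
  | |- _ <> 0 => apply Rgt_not_eq end; try lra.

Definition exp_dens P Q k s := P + Q * exp (k*s) ^ 3.

Definition two_jump_rep c0 cT P Q k T :=
  {| jumps := (0, c0) :: (T, cT) :: nil; dens := exp_dens P Q k |}.

Lemma mu_int_two_jump c0 cT P Q k T h :
  mu_int T (two_jump_rep c0 cT P Q k T) h =
  c0 * h 0 + cT * h T + RInt (fun s => exp_dens P Q k s * h s) 0 T.
Proof. unfold mu_int, two_jump_rep; simpl. ring. Qed.

Definition laurent a0 a1 am a3 v := a0 + a1*v + am/v + a3*v^3.

(* An antiderivative in [t] of [exp_dens P Q k t * laurent a0 a1 am a3 v], where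
   [v = exp (k*t)], so that [dv/dt = k v]. *)
Definition laurent_antider P Q k a0 a1 am a3 t v :=
  P*a0*t + P*a1*v/k - P*am/(k*v) + (P*a3 + Q*a0)*v^3/(3*k)
  + Q*a1*v^4/(4*k) + Q*am*v^2/(2*k) + Q*a3*v^6/(6*k).

Lemma mu_int_two_jump_laurent c0 cT P Q k T a0 a1 am a3 (h : R -> R) : 0 < k -> 0 < T ->
  (forall t, 0 < t < T -> h t = laurent a0 a1 am a3 (exp (k*t))) ->
  mu_int T (two_jump_rep c0 cT P Q k T) h =
  c0 * h 0 + cT * h T
  + (laurent_antider P Q k a0 a1 am a3 T (exp (k*T)) - laurent_antider P Q k a0 a1 am a3 0 1).
Proof.
  intros Hk HT Hh. rewrite mu_int_two_jump. f_equal.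
  apply is_RInt_unique.
  replace (laurent_antider P Q k a0 a1 am a3 0 1)
    with (laurent_antider P Q k a0 a1 am a3 0 (exp (k*0))) by now rewrite Rmult_0_r, exp_0.
  apply (is_RInt_antiderivative (fun t => laurent_antider P Q k a0 a1 am a3 t (exp (k*t)))
           (fun t => exp_dens P Q k t * laurent a0 a1 am a3 (exp (k*t)))); try lra.
  - intros s _. pose proof (exp_pos (k*s)). unfold laurent_antider. auto_derive; [nonzero|].
    unfold exp_dens, laurent. field. nonzero.
  - intros s _. pose proof (exp_pos (k*s)). apply ex_derive_continuous_R.
    unfold exp_dens, laurent. auto_derive. nonzero.
  - intros s Hs. now rewrite Hh.
Qed.

Lemma is_RInt_exp_dens_past P Q k t : 0 < k -> 0 <= t ->
  is_RInt (fun s => exp_dens P Q k s * exp (- k * (t - s))) 0 t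
    ((P*(exp (k*t) - 1)/k + Q*(exp (k*t)^4 - 1)/(4*k)) / exp (k*t)).
Proof.
  intros Hk Ht. pose proof (exp_pos (k*t)) as Hv.
  set (F s := (P*exp (k*s)/k + Q*exp (k*s)^4/(4*k)) / exp (k*t)).
  replace (_ / exp (k*t)) with (F t - F 0)
    by (unfold F; rewrite Rmult_0_r, exp_0; field; lra).
  apply (is_RInt_antiderivative F (fun s => (P + Q*exp (k*s)^3) * exp (k*s) / exp (k*t)));
    try assumption.
  - intros s _. unfold F. auto_derive; [auto|]. field. lra.
  - intros s _. apply ex_derive_continuous_R. auto_derive. lra.
  - intros s _. replace (-k*(t-s)) with (k*s - k*t) by ring.
    rewrite exp_Rminus. unfold exp_dens. field. lra.
Qed.

Lemma mu_int_two_jump_kernel c0 cT P Q k T t : 0 < k -> 0 <= t <= T ->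
  mu_int T (two_jump_rep c0 cT P Q k T) (fun s => exp (- k * Rabs (t - s))) =
  laurent (2*P/k) (cT/exp (k*T) - P/(k*exp (k*T)) + Q*exp (k*T)^2/(2*k))
    (c0 - P/k - Q/(4*k)) (- Q/(4*k)) (exp (k*t)).
Proof.
  intros Hk Ht. rewrite mu_int_two_jump.
  pose proof (exp_pos (k*t)) as Hv. pose proof (exp_pos (k*T)) as Hu.
  assert (Hleft := is_RInt_exp_dens_past P Q k t Hk (proj1 Ht)).
  apply (is_RInt_ext _ (fun s => exp_dens P Q k s * exp (- k * Rabs (t - s)))) in Hleft;
    [|intros s Hs; rewrite Rmin_left, Rmax_right in Hs by lra; rewrite Rabs_right by lra;
      reflexivity].
  set (F s := exp (k*t) * (-P/(k*exp (k*s)) + Q*exp (k*s)^2/(2*k))).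
  assert (Hright : is_RInt (fun s => exp_dens P Q k s * exp (- k * Rabs (t - s))) t T
                     (F T - F t)).
  { apply (is_RInt_antiderivative F (fun s => (P + Q*exp (k*s)^3) * exp (k*t) / exp (k*s)));
      try lra.
    - intros s _. pose proof (exp_pos (k*s)). unfold F. auto_derive; [nonzero|]. field. nonzero.
    - intros s _. pose proof (exp_pos (k*s)).
      apply ex_derive_continuous_R. auto_derive. nonzero.
    - intros s Hs. rewrite Rabs_left by lra. replace (-k*-(t-s)) with (k*t - k*s) by ring.
      rewrite exp_Rminus. unfold exp_dens. field. nonzero. }
  rewrite (is_RInt_unique _ _ _ _ (is_RInt_Chasles _ _ _ _ _ _ Hleft Hright)).
  rewrite Rminus_0_r, Rabs_right, Rabs_left1 by lra.
  replace (-k*t) with (k*0 - k*t) by ring. replace (-k*-(t-T)) with (k*t - k*T) by ring.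
  rewrite !exp_Rminus, Rmult_0_r, exp_0.
  unfold F, laurent, plus; simpl. field. lra.
Qed.

Lemma mu_int_lt_two_jump_kernel c0 cT P Q k T t : 0 < k -> 0 < t <= T ->
  mu_int_lt (two_jump_rep c0 cT P Q k T) t (fun s => exp (- k * (t - s))) =
  laurent (P/k) 0 (c0 - P/k - Q/(4*k)) (Q/(4*k)) (exp (k*t)).
Proof.
  intros Hk Ht. unfold mu_int_lt, two_jump_rep; simpl.
  destruct (Rlt_dec 0 t); [|lra]. destruct (Rlt_dec T t); [lra|].
  rewrite (is_RInt_unique _ _ _ _ (is_RInt_exp_dens_past P Q k t Hk ltac:(lra))).
  pose proof (exp_pos (k*t)).
  replace (-k*(t-0)) with (0 - k*t) by ring. rewrite exp_Rminus, exp_0.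
  unfold laurent. field. lra.
Qed.

Lemma mu_int_lt_two_jump_at0 c0 cT P Q k T h : 0 < T ->
  mu_int_lt (two_jump_rep c0 cT P Q k T) 0 h = 0.
Proof.
  intros HT. unfold mu_int_lt, two_jump_rep; simpl.
  destruct (Rlt_dec 0 0); [lra|]. destruct (Rlt_dec T 0); [lra|].
  rewrite RInt_point. unfold zero; simpl. ring.
Qed.

Lemma cost_two_jump rho theta T c0 cT P Q d0 dT P' Q' : 0 < rho -> 0 < T ->
  let u := exp (rho*T) in
  let a1 := cT/u - P/(rho*u) + Q*u^2/(2*rho) in
  let am := c0 - P/rho - Q/(4*rho) in
  let bm := d0 - P'/rho - Q'/(4*rho) in
  cost rho theta T (two_jump_rep c0 cT P Q rho T) (two_jump_rep d0 dT P' Q' rho T) =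
  1/2 * (c0 * laurent (2*P/rho) a1 am (-Q/(4*rho)) 1
         + cT * laurent (2*P/rho) a1 am (-Q/(4*rho)) u
         + (laurent_antider P Q rho (2*P/rho) a1 am (-Q/(4*rho)) T u
            - laurent_antider P Q rho (2*P/rho) a1 am (-Q/(4*rho)) 0 1))
  + (cT * laurent (P'/rho) 0 bm (Q'/(4*rho)) u
     + (laurent_antider P Q rho (P'/rho) 0 bm (Q'/(4*rho)) T u
        - laurent_antider P Q rho (P'/rho) 0 bm (Q'/(4*rho)) 0 1))
  + 1/2 * (c0 * d0 + cT * dT) + theta * (c0^2 + cT^2).
Proof.
  intros Hk HT u a1 am bm. unfold cost.
  rewrite (mu_int_two_jump_laurent _ _ _ _ _ _ (2*P/rho) a1 am (-Q/(4*rho))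
    (fun t => mu_int T (two_jump_rep c0 cT P Q rho T) (fun s => exp (- rho * Rabs (t - s))))) by
    (try assumption; intros t Ht; now apply mu_int_two_jump_kernel; [|lra]).
  rewrite (mu_int_two_jump_laurent _ _ _ _ _ _ (P'/rho) 0 bm (Q'/(4*rho))
    (fun t => mu_int_lt (two_jump_rep d0 dT P' Q' rho T) t (fun s => exp (- rho * (t - s))))) by
    (try assumption; intros t Ht; now apply mu_int_lt_two_jump_kernel; [|lra]).
  cbv beta.
  rewrite mu_int_lt_two_jump_at0, mu_int_lt_two_jump_kernel, !mu_int_two_jump_kernel
    by (assumption || lra).
  rewrite Rmult_0_r, exp_0.
  unfold jump_at, lsum; cbn [two_jump_rep jumps map fst snd fold_right].
  destruct (Req_EM_T 0 0); [|congruence]. destruct (Req_EM_T T 0); [lra|].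
  destruct (Req_EM_T 0 T); [lra|]. destruct (Req_EM_T T T); [|congruence].
  subst u a1 am bm. ring.
Qed.

Lemma RInt_exp_dens P Q k t : 0 < k -> 0 <= t ->
  RInt (exp_dens P Q k) 0 t = P*t + Q*(exp (k*t)^3 - 1)/(3*k).
Proof.
  intros Hk Ht. apply is_RInt_unique.
  set (F s := P*s + Q*exp (k*s)^3/(3*k)).
  replace (P*t + _) with (F t - F 0) by (unfold F; rewrite !Rmult_0_r, exp_0; field; lra).
  apply (is_RInt_antiderivative F (exp_dens P Q k)); try assumption.
  - intros s _. unfold F. auto_derive; [auto|]. unfold exp_dens. field. lra.
  - intros s _. apply ex_derive_continuous_R.
    unfold exp_dens. auto_derive. auto.
  - reflexivity.
Qed.

Definition denomV rho T := 2 * exp (3*rho*T) * (3*rho*T + 5) - 1.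

Lemma denomV_pos rho T : 0 < rho -> 0 < T -> 0 < denomV rho T.
Proof.
  intros. unfold denomV. assert (0 < rho*T) by now apply Rmult_lt_0_compat.
  assert (1 < exp (3*rho*T)) by (rewrite <- exp_0; apply exp_increasing; lra).
  nra.
Qed.

Lemma denomW_pos rho T : 0 < rho -> 0 < T -> 0 < rho*T + 1.
Proof. intros. assert (0 < rho*T) by now apply Rmult_lt_0_compat. lra. Qed.

(* V jumps by V_0 - V_{0-} at 0 and is continuous at T; W jumps only at T, from
   W_{T-} = 1/(rho T + 1) to 0; V' and W' are of the form P + Q e^{3 rho t}. *)
Lemma is_rep_VW rho T a b X X0m : 0 < rho -> 0 < T ->
  (forall t, X t = a * Vf rho T t + b * Wf rho T t) -> X0m = a * V0m + b * W0m ->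
  is_rep T X0m X
    (two_jump_rep (a * ((exp (3*rho*T) * (6*rho*T + 4) - 4) / denomV rho T - 1))
                  (- b / (rho*T + 1))
                  (- 6*rho*a*exp (3*rho*T) / denomV rho T - rho*b/(rho*T + 1))
                  (- 12*rho*a / denomV rho T) rho T).
Proof.
  intros Hk HT HX HX0. pose proof (denomV_pos rho T Hk HT) as HD.
  pose proof (denomW_pos rho T Hk HT) as HN.
  unfold two_jump_rep, is_rep; cbn [jumps dens map fst snd].
  split; [|split; [|split]].
  - constructor; [intros [H|[]]; lra|]. constructor; [tauto|constructor].
  - intros p [<-|[<-|[]]]; simpl; lra.
  - intros t _. apply ex_derive_continuous_R.
    unfold exp_dens. auto_derive. auto.
  - intros t Ht. rewrite RInt_exp_dens, HX, HX0 by lra.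
    unfold Vf, Wf, V0m, W0m, lsum; simpl. unfold denomV in *. rewrite !exp_3mul in *.
    destruct (Rle_dec t T); [|lra]. destruct (Rle_dec 0 t); [|lra].
    destruct (Rlt_dec t T).
    + destruct (Rle_dec T t); [lra|]. field. lra.
    + assert (t = T) by lra. subst t. destruct (Rle_dec T T); [|lra]. field. lra.
Qed.

Theorem corollary4p6 (rho T x y : R) :
  0 < rho -> 0 < T ->
  let X := fun t => 1/2 * (x + y) * Vf rho T t + 1/2 * (x - y) * Wf rho T t in
  let Y := fun t => 1/2 * (x + y) * Vf rho T t - 1/2 * (x - y) * Wf rho T t in
  let X0m := 1/2 * (x + y) * V0m + 1/2 * (x - y) * W0m in
  let Y0m := 1/2 * (x + y) * V0m - 1/2 * (x - y) * W0m in
  (exists rX, is_rep T X0m X rX) /\ (exists rY, is_rep T Y0m Y rY) /\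
  forall rX rY, is_rep T X0m X rX -> is_rep T Y0m Y rY ->
    cost rho (1/4) T rX rY =
      (x + y)^2 * (36 * exp (6*rho*T) * (8*rho*T + 13) - 60 * exp (3*rho*T) - 3)
        / (16 * (2 * exp (3*rho*T) * (3*rho*T + 5) - 1)^2)
      + (x^2 - y^2) / (2 * (rho*T + 1))
      + (x - y)^2 / (16 * (rho*T + 1)^2).
Proof.
  intros Hk HT X Y X0m Y0m.
  assert (HrX := is_rep_VW rho T (1/2*(x+y)) (1/2*(x-y)) X X0m Hk HT
                   (fun t => eq_refl) eq_refl).
  assert (HrY := is_rep_VW rho T (1/2*(x+y)) (-(1/2*(x-y))) Y Y0m Hk HT
                   ltac:(intro t; unfold Y; ring) ltac:(unfold Y0m; ring)).
  split; [eexists; exact HrX|]. split; [eexists; exact HrY|].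
  intros rX rY HX HY.
  rewrite (cost_rep_indep rho (1/4) T X0m X Y0m Y rX _ rY _ HT HX HrX HY HrY).
  rewrite cost_two_jump by assumption.
  pose proof (denomV_pos rho T Hk HT) as HD.
  pose proof (denomW_pos rho T Hk HT) as HN.
  pose proof (exp_pos (rho*T)).
  unfold laurent, laurent_antider, denomV in *. rewrite exp_6mul, !exp_3mul in *.
  field. lra.
Qed.
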